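(* Let $R$ be a ring with $1=1_R$ and let $p\le q$ be a $1$-balanced lattice inequality in the variables $x_1,\dots,x_n$. Then the following are equivalent: (α1) for every unital left $R$-module $M$ and all $B_1,\dots,B_n\in\mathrm{Sub}\,M$, $p(B_1,\dots,B_n)\subseteq q(B_1,\dots,B_n)$; (α2) the paired-bipolar-graphs problem $\mathrm{Problem}(G_p,G_q,\phi,\psi,(R,+),1_R)$ with $\phi(i)=\xi_p(x_i)$ and $\psi(i)=\xi_q(x_i)$ has a solution.
   Context: $p\le q$ is $1$-balanced if every variable occurring in it occurs exactly once in $p$ and exactly once in $q$ (so $p$, $q$ are repetition-free in the same variables). For a repetition-free term $r$, the bipolar digraph $G_r$ (source $s_{G_r}$, sink $t_{G_r}$) and bijection $\xi_r$ from the variables of $r$ onto $E(G_r)$ are defined inductively: for a variable $x$, two vertices and one edge $\xi_r(x)$ from source to sink; for $r=r_1\vee r_2$, identify $t_{G_{r_1}}$ with $s_{G_{r_2}}$ (series composition, $s_{G_r}=s_{G_{r_1}}$, $t_{G_r}=t_{G_{r_2}}$); for $r=r_1\wedge r_2$, identify the two sources and the two sinks (parallel composition); $\xi_r=\xi_{r_1}\cup\xi_{r_2}$. Paired-bipolar-graphs problem $\mathrm{Problem}(G,H,\phi,\psi,\mathbf A,b)$: $G,H$ bipolar digraphs (acyclic, unique source and sink, at least two vertices) with $n$ edges, bijections $\phi\colon\{1,\dots,n\}\to E(G)$, $\psi\colon\{1,\dots,n\}\to E(H)$, $e_i=\phi(i)$, $e'_i=\psi(i)$, Abelian group $\mathbf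 A=(A;+)$, $b\in A$. For $\vec a\in A^n$, $X\subseteq\{1,\dots,n\}$, $\mathrm{Eff}_{\vec a}(X)(v)=\sum_{i\in X,\,h(e_i)=v}a_i-\sum_{i\in X,\,t(e_i)=v}a_i$ for $v\in V(G)$; $\mathrm{Tr}_b(s_G)=-b$, $\mathrm{Tr}_b(t_G)=b$, $\mathrm{Tr}_b(v)=0$ otherwise. $\vec a$ is a solution if $\mathrm{Eff}_{\vec a}(X)=\mathrm{Tr}_b$ for every $X$ such that $\{e'_j:j\in X\}$ is the edge set of a maximal directed path in $H$. *)

From HB Require Import structures.
From mathcomp Require Import all_boot all_order all_algebra.
Set Implicit Arguments. Unset Strict Implicit. Unset Printing Implicit Defensive.
Import GRing.Theory.
Local Open Scope ring_scope.

(* Lattice terms; variable x_{i+1} is [LVar i]. *)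
Inductive lterm := LVar of nat | LJoin of lterm & lterm | LMeet of lterm & lterm.

Fixpoint lcount (i : nat) (t : lterm) : nat :=
  match t with
  | LVar j => (j == i) : nat
  | LJoin t1 t2 => (lcount i t1 + lcount i t2)%N
  | LMeet t1 t2 => (lcount i t1 + lcount i t2)%N
  end.

Definition occurs (i : nat) (t : lterm) : bool := (0 < lcount i t)%N.

Definition one_balanced (n : nat) (p q : lterm) : Prop :=
  forall i, lcount i p = (if (i < n)%N then 1%N else 0%N) /\
            lcount i q = (if (i < n)%N then 1%N else 0%N).

Section Sub.
Variables (R : pzRingType) (M : lmodType R).

Definition submod (A : M -> Prop) : Prop :=
  [/\ A 0, (forall x y, A x -> A y -> A (x + y)) & (forall (r : R) x, A x -> A (r *: x))].

Fixpoint leval (B : nat -> M -> Prop) (t : lterm) : M -> Prop :=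
  match t with
  | LVar i => B i
  | LJoin t1 t2 => fun x => exists y z, [/\ leval B t1 y, leval B t2 z & x = y + z]
  | LMeet t1 t2 => fun x => leval B t1 x /\ leval B t2 x
  end.
End Sub.

(* Vertices are 0 .. nv-1, the source is 0 and the sink is 1.  Edges are
   labelled by the variables of r (this labelling is the bijection xi_r);
   the edge xi_r(x_i) goes from vertex [tl G i] to vertex [hd G i]. *)
Record bgraph := BGraph { nv : nat; tl : nat -> nat; hd : nat -> nat }.

Definition bsrc : nat := 0%N.
Definition bsnk : nat := 1%N.

Fixpoint graph_of (t : lterm) : bgraph :=
  match t with
  | LVar _ => BGraph 2 (fun _ => 0%N) (fun _ => 1%N)
  | LJoin t1 t2 =>
      (* series: sink of G1 identified with source of G2 (new vertex m) *)
      let G1 := graph_of t1 in let G2 := graph_of t2 in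
      let m := (nv G1 + nv G2 - 2)%N in
      let f1 v := if v == 1%N then m else v in
      let f2 v := if v == 0%N then m else if v == 1%N then 1%N
                  else (nv G1 + v - 2)%N in
      BGraph (nv G1 + nv G2 - 1)
        (fun i => if occurs i t1 then f1 (tl G1 i) else f2 (tl G2 i))
        (fun i => if occurs i t1 then f1 (hd G1 i) else f2 (hd G2 i))
  | LMeet t1 t2 =>
      (* parallel: sources identified, sinks identified *)
      let G1 := graph_of t1 in let G2 := graph_of t2 in
      let f2 v := if (v <= 1)%N then v else (nv G1 + v - 2)%N in
      BGraph (nv G1 + nv G2 - 2)
        (fun i => if occurs i t1 then tl G1 i else f2 (tl G2 i))
        (fun i => if occurs i t1 then hd G1 i else f2 (hd G2 i))
  end.

Section Problem.
Variables (A : zmodType) (n : nat).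

(* e_i = phi(i) is the edge of G labelled i; e'_i = psi(i) of H labelled i *)
Definition Eff (G : bgraph) (a : 'I_n -> A) (X : {set 'I_n}) (v : nat) : A :=
  \sum_(i in X | hd G i == v) a i - \sum_(i in X | tl G i == v) a i.

Definition Tr (b : A) (v : nat) : A :=
  if v == bsrc then - b else if v == bsnk then b else 0.

Definition dpath (H : bgraph) (s : seq 'I_n) : bool :=
  match s with
  | [::] => false
  | e :: _ => sorted (fun e1 e2 : 'I_n => hd H e1 == tl H e2) s &&
              uniq (tl H e :: [seq hd H f | f : 'I_n <- s])
  end.

Definition maxdpath (H : bgraph) (s : seq 'I_n) : Prop :=
  match s with
  | [::] => False
  | e :: _ => [/\ dpath H s,
                 (forall j : 'I_n, hd H j <> tl H e) &
                 (forall j : 'I_n, tl H j <> hd H (last e s))]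
  end.

Definition is_solution (G H : bgraph) (b : A) (a : 'I_n -> A) : Prop :=
  forall X : {set 'I_n},
    (exists s, maxdpath H s /\ X = [set e in s]) ->
    forall v, (v < nv G)%N -> Eff G a X v = Tr b v.

Definition has_solution (G H : bgraph) (b : A) : Prop :=
  exists a : 'I_n -> A, is_solution G H b a.
End Problem.

From HB Require Import structures.
Set Warnings "-notation-overridden,-ambiguous-paths".
From mathcomp Require Import all_boot all_order all_algebra.
From mathcomp Require Import zify.
Import Order.TTheory GRing.Theory Num.Theory.
Local Open Scope ring_scope.

(* An element x lies in p(B) iff there is a B-potential for it on G_p: a map g from the
   vertices to M with g(source) = 0, g(sink) = x and g(head e_i) - g(tail e_i) in B_i.
   Dually, x lies in q(B) as soon as some c_i in B_i sum to x along every source-sink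
   path of G_q.
   If a solves the problem and f is a potential for x on G_p, take
   c_i = a_i (f(head e_i) - f(tail e_i)); along a maximal path X of G_q,
   sum c_i = sum_v Eff_a(X)(v) f(v) = sum_v Tr_1(v) f(v) = f(sink) - f(source) = x.
   Conversely, in the free module on the vertices of G_p let B_i be spanned by the edge
   vector u_i = v_(head e_i) - v_(tail e_i).  Then v_sink - v_source lies in p(B), hence
   in q(B); a potential for it on G_q has increments a_i u_i, and telescoping along a
   maximal path of G_q and reading off coordinates gives Eff = Tr. *)

Definition rep_free (t : lterm) : Prop := forall i, (lcount i t <= 1)%N.

Lemma occurs_var i j : occurs i (LVar j) = (j == i).
Proof. by rewrite /occurs /=; case: eqP. Qed.

Lemma occurs_join i t1 t2 : occurs i (LJoin t1 t2) = occurs i t1 || occurs i t2.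
Proof. by rewrite /occurs /= addn_gt0. Qed.

Lemma occurs_meet i t1 t2 : occurs i (LMeet t1 t2) = occurs i t1 || occurs i t2.
Proof. by rewrite /occurs /= addn_gt0. Qed.

Lemma rep_free_join t1 t2 : rep_free (LJoin t1 t2) ->
  [/\ rep_free t1, rep_free t2 & forall i, occurs i t2 -> occurs i t1 = false].
Proof. by move=> H; split=> i; have := H i; rewrite /occurs /=; lia. Qed.

Lemma rep_free_meet t1 t2 : rep_free (LMeet t1 t2) ->
  [/\ rep_free t1, rep_free t2 & forall i, occurs i t2 -> occurs i t1 = false].
Proof. by move=> H; split=> i; have := H i; rewrite /occurs /=; lia. Qed.

Section Composition.
Variables N1 N2 : nat.

Definition series_inl (v : nat) : nat := if v == 1%N then (N1 + N2 - 2)%N else v.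

Definition series_inr (v : nat) : nat :=
  if v == 0%N then (N1 + N2 - 2)%N else if v == 1%N then 1%N else (N1 + v - 2)%N.

Definition parallel_inr (v : nat) : nat := if (v <= 1)%N then v else (N1 + v - 2)%N.

End Composition.

Lemma graph_of_join t1 t2 : let G1 := graph_of t1 in let G2 := graph_of t2 in
  graph_of (LJoin t1 t2) = BGraph (nv G1 + nv G2 - 1)
    (fun i => if occurs i t1 then series_inl (nv G1) (nv G2) (tl G1 i)
              else series_inr (nv G1) (nv G2) (tl G2 i))
    (fun i => if occurs i t1 then series_inl (nv G1) (nv G2) (hd G1 i)
              else series_inr (nv G1) (nv G2) (hd G2 i)).
Proof. by []. Qed.

Lemma graph_of_meet t1 t2 : let G1 := graph_of t1 in let G2 := graph_of t2 in
  graph_of (LMeet t1 t2) = BGraph (nv G1 + nv G2 - 2)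
    (fun i => if occurs i t1 then tl G1 i else parallel_inr (nv G1) (tl G2 i))
    (fun i => if occurs i t1 then hd G1 i else parallel_inr (nv G1) (hd G2 i)).
Proof. by []. Qed.

Lemma nv_graph_ge2 t : (2 <= nv (graph_of t))%N.
Proof. by elim: t => [i|t1 IH1 t2 IH2|t1 IH1 t2 IH2] //=; lia. Qed.

Lemma graph_edge_ends {t i} : occurs i t ->
  [/\ tl (graph_of t) i < nv (graph_of t), hd (graph_of t) i < nv (graph_of t),
      hd (graph_of t) i != 0 & tl (graph_of t) i != 1]%N.
Proof.
elim: t => [//|t1 IH1 t2 IH2|t1 IH1 t2 IH2];
  rewrite ?graph_of_join ?graph_of_meet ?occurs_join ?occurs_meet /=;
  case: (boolP (occurs i t1)) => [/IH1 [] | _ /= /IH2 []];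
  have := nv_graph_ge2 t1; have := nv_graph_ge2 t2;
  rewrite /series_inl /series_inr /parallel_inr; repeat case: ifP; move=> *; split; lia.
Qed.

Lemma graph_sink_edge {t} : rep_free t -> exists2 j, occurs j t & hd (graph_of t) j = 1%N.
Proof.
elim: t => [i|t1 IH1 t2 IH2|t1 IH1 t2 IH2].
- by exists i; rewrite ?occurs_var.
- case/rep_free_join=> _ /IH2 [j oj hj] d; exists j; first by rewrite occurs_join oj orbT.
  by rewrite graph_of_join /= d // hj.
- case/rep_free_meet=> /IH1 [j oj hj] _ _; exists j; first by rewrite occurs_meet oj.
  by rewrite graph_of_meet /= oj hj.
Qed.

Lemma graph_source_edge {t} : rep_free t -> exists2 j, occurs j t & tl (graph_of t) j = 0%N.
Proof.
elim: t => [i|t1 IH1 t2 IH2|t1 IH1 t2 IH2].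
- by exists i; rewrite ?occurs_var.
- case/rep_free_join=> /IH1 [j oj hj] _ _; exists j; first by rewrite occurs_join oj.
  by rewrite graph_of_join /= oj hj.
- case/rep_free_meet=> /IH1 [j oj hj] _ _; exists j; first by rewrite occurs_meet oj.
  by rewrite graph_of_meet /= oj hj.
Qed.

Lemma graph_pred_edge {t i} : rep_free t -> occurs i t -> tl (graph_of t) i != 0%N ->
  exists2 j, occurs j t & hd (graph_of t) j = tl (graph_of t) i.
Proof.
elim: t i => [//|t1 IH1 t2 IH2|t1 IH1 t2 IH2] i.
- case/rep_free_join=> r1 r2 d; rewrite occurs_join graph_of_join /=.
  case: (boolP (occurs i t1)) => [o1 _|_ /= o2].
  + have [->//|/(IH1 i r1 o1) [j oj hj]] := eqVneq (tl (graph_of t1) i) 0%N.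
    by exists j; rewrite ?occurs_join ?oj // hj.
  + have [-> _|/(IH2 i r2 o2) [j oj hj] _] := eqVneq (tl (graph_of t2) i) 0%N.
      by have [j oj hj] := graph_sink_edge r1; exists j; rewrite ?occurs_join ?oj // hj.
    by exists j; rewrite ?occurs_join ?oj ?orbT // d // hj.
- case/rep_free_meet=> r1 r2 d; rewrite occurs_meet graph_of_meet /=.
  case: (boolP (occurs i t1)) => [o1 _ /(IH1 i r1 o1) [j oj hj]|_ /= o2].
    by exists j; rewrite ?occurs_meet ?oj // hj.
  have [->//|/(IH2 i r2 o2) [j oj hj] _] := eqVneq (tl (graph_of t2) i) 0%N.
  by exists j; rewrite ?occurs_meet ?oj ?orbT // d // hj.
Qed.

Lemma graph_succ_edge {t i} : rep_free t -> occurs i t -> hd (graph_of t) i != 1%N ->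
  exists2 j, occurs j t & tl (graph_of t) j = hd (graph_of t) i.
Proof.
elim: t i => [//|t1 IH1 t2 IH2|t1 IH1 t2 IH2] i.
- case/rep_free_join=> r1 r2 d; rewrite occurs_join graph_of_join /=.
  case: (boolP (occurs i t1)) => [o1 _|_ /= o2].
  + have [-> _|/(IH1 i r1 o1) [j oj hj] _] := eqVneq (hd (graph_of t1) i) 1%N.
      have [j oj hj] := graph_source_edge r2.
      by exists j; rewrite ?occurs_join ?oj ?orbT // d // hj.
    by exists j; rewrite ?occurs_join ?oj // hj.
  + have [->//|/(IH2 i r2 o2) [j oj hj]] := eqVneq (hd (graph_of t2) i) 1%N.
    by exists j; rewrite ?occurs_join ?oj ?orbT // d // hj.
- case/rep_free_meet=> r1 r2 d; rewrite occurs_meet graph_of_meet /=.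
  case: (boolP (occurs i t1)) => [o1 _ /(IH1 i r1 o1) [j oj hj]|_ /= o2].
    by exists j; rewrite ?occurs_meet ?oj // hj.
  have [->//|/(IH2 i r2 o2) [j oj hj] _] := eqVneq (hd (graph_of t2) i) 1%N.
  by exists j; rewrite ?occurs_meet ?oj ?orbT // d // hj.
Qed.

Lemma series_glue {V : zmodType} {N1 N2 : nat} (g1 g2 : nat -> V) :
  (2 <= N1)%N -> (2 <= N2)%N -> g2 0%N = 0 ->
  exists g : nat -> V,
    (forall v, (v < N1)%N -> g (series_inl N1 N2 v) = g1 v) /\
    (forall v, (v < N2)%N -> g (series_inr N1 N2 v) = g1 1%N + g2 v).
Proof.
move=> h1 h2 g20; pose m := (N1 + N2 - 2)%N.
exists (fun w => if w == m then g1 1%N else if w == 1%N then g1 1%N + g2 1%N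
  else if (w < N1)%N then g1 w else g1 1%N + g2 (w + 2 - N1)%N).
split=> v lv; rewrite /series_inl /series_inr -/m.
- have [-> | v1] := eqVneq v 1%N; first by rewrite /= eqxx.
  have -> : (v == m) = false by apply/eqP; lia.
  by rewrite (negbTE v1) lv.
- have [-> | v0] := eqVneq v 0%N; first by rewrite eqxx g20 addr0.
  have [-> | v1] := eqVneq v 1%N; first by have -> : (1 == m)%N = false by apply/eqP; lia.
  have -> : (N1 + v - 2 == m)%N = false by apply/eqP; lia.
  have -> : (N1 + v - 2 == 1)%N = false by apply/eqP; lia.
  have -> : (N1 + v - 2 < N1)%N = false by apply/negbTE; lia.
  by congr (_ + g2 _); lia.
Qed.

Lemma parallel_glue {V : Type} {N1 : nat} (g1 g2 : nat -> V) :
  (2 <= N1)%N -> g1 0%N = g2 0%N -> g1 1%N = g2 1%N ->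
  exists g : nat -> V,
    (forall v, (v < N1)%N -> g v = g1 v) /\ (forall v, g (parallel_inr N1 v) = g2 v).
Proof.
move=> h1 e0 e1; exists (fun w => if (w < N1)%N then g1 w else g2 (w + 2 - N1)%N).
split=> v; first by move=> ->.
rewrite /parallel_inr; case: (leqP v 1) => [v1 | v2] /=.
- by rewrite (leq_trans _ h1) ?ltnS //; case: v v1 => [|[|]].
- have -> : (N1 + v - 2 < N1)%N = false by apply/negbTE; lia.
  by congr g2; lia.
Qed.

Section Potential.
Context {R : pzRingType} {M : lmodType R}.
Implicit Types (B : nat -> M -> Prop) (g : nat -> M).

Definition potential B t g : Prop :=
  forall i, occurs i t -> B i (g (hd (graph_of t) i) - g (tl (graph_of t) i)).

Lemma leval_potential B t x : leval B t x ->
  exists g, [/\ g 0%N = 0, g 1%N = x & potential B t g].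
Proof.
have h1 := nv_graph_ge2; elim: t x => [k|t1 IH1 t2 IH2|t1 IH1 t2 IH2] x /=.
- move=> Bx; exists (fun v => if v == 1%N then x else 0); split=> // i.
  by rewrite occurs_var => /eqP <-; rewrite /= subr0.
- case=> y [z [/IH1 [g1 [g10 g11 pg1]] /IH2 [g2 [g20 g21 pg2]] ->]].
  have [g [gl gr]] := series_glue g1 g2 (h1 t1) (h1 t2) g20.
  exists g; split.
  + by have := gl 0%N (ltnW (h1 t1)); rewrite g10.
  + by have := gr 1%N (h1 t2); rewrite g11 g21.
  + move=> i; rewrite /potential occurs_join graph_of_join /=.
    case: (boolP (occurs i t1)) => [o1 _ | _ /= o2].
      by have [lt lh _ _] := graph_edge_ends o1; rewrite !gl //; apply: pg1.
    have [lt lh _ _] := graph_edge_ends o2.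
    by rewrite !gr // (addrC (g1 1%N)) addrKA; apply: pg2.
- case=> /IH1 [g1 [g10 g11 pg1]] /IH2 [g2 [g20 g21 pg2]].
  have e0 : g1 0%N = g2 0%N by rewrite g10 g20.
  have e1 : g1 1%N = g2 1%N by rewrite g11 g21.
  have [g [gl gr]] := parallel_glue g1 g2 (h1 t1) e0 e1.
  exists g; split; [by rewrite gl // ltnW | by rewrite gl | move=> i].
  rewrite /potential occurs_meet graph_of_meet /=.
  case: (boolP (occurs i t1)) => [o1 _ | _ /= o2]; last by rewrite !gr; apply: pg2.
  by have [lt lh _ _] := graph_edge_ends o1; rewrite !gl //; apply: pg1.
Qed.

Lemma potential_leval B t g : rep_free t -> potential B t g -> leval B t (g 1%N - g 0%N).
Proof.
elim: t g => [k|t1 IH1 t2 IH2|t1 IH1 t2 IH2] g.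
- by move=> _ /(_ k); rewrite occurs_var eqxx; apply.
- case/rep_free_join=> r1 r2 d pg; pose N1 := nv (graph_of t1); pose N2 := nv (graph_of t2).
  exists (g (series_inl N1 N2 1%N) - g 0%N), (g 1%N - g (series_inr N1 N2 0%N)); split.
  + apply: (IH1 (g \o series_inl N1 N2) r1) => i oi.
    by have := pg i; rewrite occurs_join oi graph_of_join /= oi; apply.
  + apply: (IH2 (g \o series_inr N1 N2) r2) => i oi.
    by have := pg i; rewrite occurs_join oi orbT graph_of_join /= d //; apply.
  + by rewrite /= [RHS]addrC addrA subrK.
- case/rep_free_meet=> r1 r2 d pg; split.
  + apply: IH1 r1 _ => i oi.
    by have := pg i; rewrite occurs_meet oi graph_of_meet /= oi; apply.
  + apply: (IH2 (g \o parallel_inr (nv (graph_of t1))) r2) => i oi.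
    by have := pg i; rewrite occurs_meet oi orbT graph_of_meet /= d //; apply.
Qed.

End Potential.

Definition edge_rel (G : bgraph) (n : nat) : rel 'I_n := fun e1 e2 => hd G e1 == tl G e2.

Definition positive_int : nat -> int^o -> Prop := fun _ z => 0 < z.

Lemma leval_positive t :
  exists N : int, forall x : int, N <= x -> leval positive_int t (x : int^o).
Proof.
elim: t => [k|t1 [N1 H1] t2 [N2 H2]|t1 [N1 H1] t2 [N2 H2]] /=.
- by exists 1 => x; rewrite /positive_int; lia.
- exists (N1 + N2) => x hx; exists (N1 : int^o), ((x - N1 : int) : int^o); split.
  + exact: H1.
  + by apply: H2; lia.
  + by rewrite addrC subrK.
- by exists (Num.max N1 N2) => x hx; split; [apply: H1 | apply: H2]; lia.
Qed.

(* A potential for a large integer w.r.t. the positive integers strictly increases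
   along every edge, so G_t is acyclic. *)
Lemma graph_increasing_potential t :
  exists g : nat -> int, forall i, occurs i t -> g (tl (graph_of t) i) < g (hd (graph_of t) i).
Proof.
have [N /(_ N (lexx N)) /leval_potential [g [_ _ pg]]] := leval_positive t.
by exists g => i /pg; rewrite /positive_int subr_gt0.
Qed.

Lemma graph_path_uniq t n (e : 'I_n) (s : seq 'I_n) :
  (forall i : 'I_n, i \in e :: s -> occurs i t) -> path (edge_rel (graph_of t) n) e s ->
  uniq (tl (graph_of t) e :: [seq hd (graph_of t) i | i : 'I_n <- e :: s]).
Proof.
move=> occ es; have [g incr] := graph_increasing_potential t.
suff: sorted (fun u v => g u < g v)
        (tl (graph_of t) e :: [seq hd (graph_of t) i | i : 'I_n <- e :: s]).
  by apply: sorted_uniq => [y x z | x]; [exact: lt_trans | exact: ltxx].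
elim: s e occ es => [|e2 s IH] e occ /=; first by rewrite andbT incr ?occ ?mem_head.
case/andP=> /eqP he es; rewrite incr ?occ ?mem_head //=.
have := IH e2 _ es; rewrite /= -he; apply=> i ii.
by apply: occ; rewrite inE ii orbT.
Qed.

(* The source-to-sink paths of [G_t], read off the term. *)
Inductive st_path (n : nat) : lterm -> seq 'I_n -> Prop :=
| StVar (j : 'I_n) : st_path n (LVar j) [:: j]
| StJoin t1 t2 s1 s2 : st_path n t1 s1 -> st_path n t2 s2 -> st_path n (LJoin t1 t2) (s1 ++ s2)
| StMeetL t1 t2 s : st_path n t1 s -> st_path n (LMeet t1 t2) s
| StMeetR t1 t2 s : st_path n t2 s -> st_path n (LMeet t1 t2) s.
Arguments StVar {n} j.
Arguments StJoin {n t1 t2 s1 s2}.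
Arguments StMeetL {n t1} t2 {s}.
Arguments StMeetR {n} t1 {t2 s}.

Lemma st_path_exists {n t} : (forall i, occurs i t -> (i < n)%N) -> exists s, st_path n t s.
Proof.
elim: t => [k|t1 IH1 t2 IH2|t1 IH1 t2 IH2] occ.
- have lk : (k < n)%N by apply: occ; rewrite occurs_var.
  by exists [:: Ordinal lk]; exact: (StVar (Ordinal lk)).
- have [i oi|s1 h1] := IH1; first by apply: occ; rewrite occurs_join oi.
  have [i oi|s2 h2] := IH2; first by apply: occ; rewrite occurs_join oi orbT.
  by exists (s1 ++ s2); apply: StJoin.
- have [i oi|s1 h1] := IH1; first by apply: occ; rewrite occurs_meet oi.
  by exists s1; apply: StMeetL.
Qed.

Lemma st_path_occurs {n t s} : st_path n t s -> forall i : 'I_n, i \in s -> occurs i t.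
Proof.
elim=> [j|t1 t2 s1 s2 _ IH1 _ IH2|t1 t2 s0 _ IH|t1 t2 s0 _ IH] i.
- by rewrite inE => /eqP ->; rewrite occurs_var.
- by rewrite mem_cat occurs_join => /orP[/IH1 ->|/IH2 ->] //; rewrite orbT.
- by rewrite occurs_meet => /IH ->.
- by rewrite occurs_meet => /IH ->; rewrite orbT.
Qed.

Lemma path_edge_rel_map {G G' : bgraph} {n} (f : nat -> nat) {e : 'I_n} {s} :
  (forall i, i \in e :: s -> tl G' i = f (tl G i) /\ hd G' i = f (hd G i)) ->
  path (edge_rel G n) e s -> path (edge_rel G' n) e s.
Proof.
move=> Gf; apply: (sub_in_path (P := mem (e :: s))); last by apply/allP.
by move=> i j /Gf [_ hi] /Gf [hj _]; rewrite /edge_rel hi hj => /eqP ->.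
Qed.

Lemma st_path_shape {n t s} : rep_free t -> st_path n t s ->
  exists e s', [/\ s = e :: s', tl (graph_of t) e = 0%N,
    hd (graph_of t) (last e s') = 1%N & path (edge_rel (graph_of t) n) e s'].
Proof.
move=> r st; elim: st r => [j|t1 t2 s1 s2 st1 IH1 st2 IH2|t1 t2 s0 st IH|t1 t2 s0 st IH].
- by exists j, [::].
- case/rep_free_join=> /IH1 [e1 [s1' [E1 tl1 hd1 p1]]] /IH2 [e2 [s2' [E2 tl2 hd2 p2]]] d.
  subst s1 s2.
  have o1 := st_path_occurs st1; have o2 := st_path_occurs st2.
  pose N1 := nv (graph_of t1); pose N2 := nv (graph_of t2).
  exists e1, (s1' ++ e2 :: s2'); rewrite graph_of_join /=; split=> //.
  + by rewrite o1 ?mem_head // tl1.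
  + by rewrite last_cat /= d ?o2 ?mem_last // hd2.
  + rewrite cat_path /= {2}/edge_rel /= o1 ?mem_last // hd1 d ?o2 ?mem_head // tl2 eqxx.
    apply/and3P; split=> //.
    * by apply: (path_edge_rel_map (series_inl N1 N2)) p1 => i /o1 /= ->.
    * by apply: (path_edge_rel_map (series_inr N1 N2)) p2 => i /o2 /= /d ->.
- case/rep_free_meet=> /IH [e [s' [E tle hde p]]] _ _; subst s0.
  have o := st_path_occurs st.
  exists e, s'; rewrite graph_of_meet /= o ?mem_head ?o ?mem_last //; split=> //.
  by apply: (path_edge_rel_map id) p => i /o /= ->.
- case/rep_free_meet=> _ /IH [e [s' [E tle hde p]]] d; subst s0.
  have o := st_path_occurs st.
  exists e, s'; rewrite graph_of_meet /= d ?o ?mem_head // d ?o ?mem_last //.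
  rewrite tle hde; split=> //.
  by apply: (path_edge_rel_map (parallel_inr (nv (graph_of t1)))) p => i /o /= /d ->.
Qed.

Lemma leval_of_st_path_sums {R : pzRingType} {M : lmodType R} (B : nat -> M -> Prop)
    n t (c : 'I_n -> M) (x : M) :
  (forall i, occurs i t -> (i < n)%N) -> (forall i : 'I_n, occurs i t -> B i (c i)) ->
  (forall s, st_path n t s -> \sum_(i <- s) c i = x) -> leval B t x.
Proof.
elim: t x => [k|t1 IH1 t2 IH2|t1 IH1 t2 IH2] x occ Bc sum_x /=.
- have lk : (k < n)%N by apply: occ; rewrite occurs_var.
  rewrite -(sum_x _ (StVar (Ordinal lk))) big_seq1.
  by apply: (Bc (Ordinal lk)); rewrite occurs_var.
- have occ1 i : occurs i t1 -> (i < n)%N by move=> oi; apply: occ; rewrite occurs_join oi.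
  have occ2 i : occurs i t2 -> (i < n)%N by move=> oi; apply: occ; rewrite occurs_join oi orbT.
  have [s1 st1] := st_path_exists occ1; have [s2 st2] := st_path_exists occ2.
  exists (x - \sum_(i <- s2) c i), (x - \sum_(i <- s1) c i); split.
  + apply: IH1 => // [i oi | s st]; first by apply: Bc; rewrite occurs_join oi.
    by rewrite -(sum_x _ (StJoin st st2)) big_cat addrK.
  + apply: IH2 => // [i oi | s st]; first by apply: Bc; rewrite occurs_join oi orbT.
    by rewrite -(sum_x _ (StJoin st1 st)) big_cat addrC addKr.
  + by rewrite -(sum_x _ (StJoin st1 st2)) big_cat addrK; congr (_ + _); rewrite addrC addKr.
- split.
  + apply: IH1 => [i oi | i oi | s st]; last exact: sum_x (StMeetL _ st).
      by apply: occ; rewrite occurs_meet oi.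
    by apply: Bc; rewrite occurs_meet oi.
  + apply: IH2 => [i oi | i oi | s st]; last exact: sum_x (StMeetR _ st).
      by apply: occ; rewrite occurs_meet oi orbT.
    by apply: Bc; rewrite occurs_meet oi orbT.
Qed.

Lemma sum_maxdpath_edges {V : zmodType} {H : bgraph} {n} {s : seq 'I_n} (F : 'I_n -> V) :
  maxdpath H s -> \sum_(i in [set i in s]) F i = \sum_(i <- s) F i.
Proof.
case: s => [//|e s] [/andP [_]]; rewrite cons_uniq => /andP [_ /map_uniq us] _ _.
by rewrite big_uniq //; apply: eq_bigl => i; rewrite inE.
Qed.

Section MaximalPaths.
Context {n : nat} {t : lterm}.
Hypotheses (t_rep_free : rep_free t) (t_occurs : forall i, occurs i t = (i < n)%N).

Let occurs_ord (i : 'I_n) : occurs i t.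
Proof. by rewrite t_occurs ltn_ord. Qed.

Lemma maxdpath_shape {e : 'I_n} {s} : maxdpath (graph_of t) (e :: s) ->
  [/\ tl (graph_of t) e = 0%N, hd (graph_of t) (last e s) = 1%N
    & path (edge_rel (graph_of t) n) e s].
Proof.
case=> /andP [es _] no_pred no_succ; split; last exact: es.
- apply/eqP; apply: contraT => /(graph_pred_edge t_rep_free (occurs_ord e)) [j].
  by rewrite t_occurs => lj /(no_pred (Ordinal lj)).
- apply/eqP; apply: contraT => /(graph_succ_edge t_rep_free (occurs_ord _)) [j].
  by rewrite t_occurs => lj /(no_succ (Ordinal lj)).
Qed.

Lemma st_path_maxdpath s : st_path n t s -> maxdpath (graph_of t) s.
Proof.
case/(st_path_shape t_rep_free) => e [s' [-> tle hdl es]]; split.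
- by apply/andP; split; [exact: es | apply: graph_path_uniq].
- by move=> j; rewrite tle; have [_ _ /eqP] := graph_edge_ends (occurs_ord j).
- by move=> j; rewrite hdl; have [_ _ _ /eqP] := graph_edge_ends (occurs_ord j).
Qed.

End MaximalPaths.

Definition edges_within (G : bgraph) (n : nat) : Prop :=
  forall i : 'I_n, (hd G i < nv G /\ tl G i < nv G)%N.

Lemma sum_path_telescope (V : zmodType) (G : bgraph) n (f : nat -> V) (e : 'I_n) s :
  path (edge_rel G n) e s ->
  \sum_(i <- e :: s) (f (hd G i) - f (tl G i)) = f (hd G (last e s)) - f (tl G e).
Proof.
elim: s e => [|e2 s IH] e /=; first by rewrite big_seq1.
by case/andP=> /eqP he /IH; rewrite big_cons => ->; rewrite -he addrC addrA subrK.
Qed.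

Section Flows.
Context {R : pzRingType} {V : lmodType R}.

Lemma sum_Tr_scale {N} (b : R) (f : nat -> V) : (2 <= N)%N ->
  \sum_(v < N) Tr b v *: f v = b *: (f 1%N - f 0%N).
Proof.
case: N => [|[|N]] // _; rewrite !big_ord_recl big1 => [|i _]; last by rewrite /Tr scale0r.
by rewrite /Tr /= addr0 scaleNr scalerBr addrC.
Qed.

Lemma sum_Eff_scale (G : bgraph) n (a : 'I_n -> R) (X : {set 'I_n}) (f : nat -> V) :
  edges_within G n ->
  \sum_(i in X) a i *: (f (hd G i) - f (tl G i)) = \sum_(v < nv G) Eff G a X v *: f v.
Proof.
move=> ends.
have sum_at (h : 'I_n -> nat) : (forall i, h i < nv G)%N ->
    \sum_(v < nv G) (\sum_(i in X | h i == v) a i) *: f v = \sum_(i in X) a i *: f (h i).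
  move=> hlt; under eq_bigr => v _ do rewrite scaler_suml big_mkcondr.
  rewrite exchange_big /=; apply: eq_bigr => i _.
  by rewrite -big_mkcond /= (big_pred1 (Ordinal (hlt i))).
under [RHS]eq_bigr => v _ do rewrite /Eff scalerBl.
rewrite sumrB !sum_at => [|i|i]; try by case: (ends i).
by rewrite -sumrB; apply: eq_bigr => i _; rewrite scalerBr.
Qed.

Lemma solution_path_sum {n} {G H : bgraph} {a : 'I_n -> R} (f : nat -> V) {s} :
  (2 <= nv G)%N -> edges_within G n ->
  is_solution G H 1 a -> maxdpath H s ->
  \sum_(i <- s) a i *: (f (hd G i) - f (tl G i)) = f 1%N - f 0%N.
Proof.
move=> G2 ends sol ms.
rewrite -(sum_maxdpath_edges _ ms) sum_Eff_scale // -[RHS]scale1r -(sum_Tr_scale _ _ G2).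
by apply: eq_bigr => v _; rewrite (sol _ (ex_intro _ s (conj ms erefl))).
Qed.

End Flows.

Definition vertex_vec (R : pzRingType) N (w : nat) : {ffun 'I_N -> R^o} :=
  [ffun u => (val u == w)%:R].

Lemma sum_vertex_vecE (R : pzRingType) N (E : nat -> R) (u : 'I_N) :
  (\sum_(w < N) E w *: vertex_vec R N w) u = E u.
Proof.
rewrite sum_ffunE (bigD1 u) //= !ffunE eqxx [_ *: _]mulr1 big1 ?addr0 // => w wu.
by rewrite !ffunE /= eq_sym (inj_eq val_inj) (negbTE wu) [_ *: _]mulr0.
Qed.

Lemma solution_of_path_sums {R : pzRingType} {n} {G H : bgraph} {a : 'I_n -> R} :
  (2 <= nv G)%N -> edges_within G n ->
  (forall s, maxdpath H s ->
     \sum_(i <- s) a i *: (vertex_vec R (nv G) (hd G i) - vertex_vec R (nv G) (tl G i)) =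
     vertex_vec R (nv G) 1 - vertex_vec R (nv G) 0) ->
  is_solution G H 1 a.
Proof.
move=> G2 ends sums X [s [ms ->]] v lv; have sum_s := sums s ms.
rewrite -(sum_maxdpath_edges _ ms) sum_Eff_scale // in sum_s.
rewrite -[X in _ = X]scale1r -(sum_Tr_scale _ _ G2) in sum_s.
move/(congr1 (fun m : {ffun 'I_(nv G) -> R^o} => m (Ordinal lv))): sum_s.
by rewrite !sum_vertex_vecE.
Qed.

Lemma one_balanced_terms n p q : one_balanced n p q ->
  [/\ rep_free p, rep_free q, forall i, occurs i p = (i < n)%N
    & forall i, occurs i q = (i < n)%N].
Proof.
by move=> bal; split=> i; have [lp lq] := bal i; rewrite /occurs ?lp ?lq; case: (i < n)%N.
Qed.

Lemma graph_edges_within {n t} :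
  (forall i, occurs i t = (i < n)%N) -> edges_within (graph_of t) n.
Proof. by move=> occ i; have [] := @graph_edge_ends t i; rewrite ?occ ?ltn_ord. Qed.

Lemma leval_le_of_solution (R : pzRingType) n p q (a : 'I_n -> R) :
  one_balanced n p q -> is_solution (graph_of p) (graph_of q) 1 a ->
  forall (M : lmodType R) (B : nat -> M -> Prop), (forall i, (i < n)%N -> submod (B i)) ->
  forall x, leval B p x -> leval B q x.
Proof.
case/one_balanced_terms=> rp rq op oq sol M B subB x /leval_potential [f [f0 f1 pf]].
pose c i := a i *: (f (hd (graph_of p) i) - f (tl (graph_of p) i)).
apply: (leval_of_st_path_sums B n q c) => [i | i _ | s /(st_path_maxdpath rq oq) ms].
- by rewrite oq.
- have [_ _ closedZ] := subB i (ltn_ord i).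
  by apply/closedZ/pf; rewrite op ltn_ord.
- rewrite (solution_path_sum f (nv_graph_ge2 p) (graph_edges_within op) sol ms).
  by rewrite f0 f1 subr0.
Qed.

Lemma solution_of_leval_le (R : pzRingType) n p q : one_balanced n p q ->
  (forall (M : lmodType R) (B : nat -> M -> Prop), (forall i, (i < n)%N -> submod (B i)) ->
     forall x, leval B p x -> leval B q x) ->
  has_solution n (graph_of p) (graph_of q) (1 : R).
Proof.
case/one_balanced_terms=> rp rq op oq le_pq.
pose ev := vertex_vec R (nv (graph_of p)).
pose w i := ev (hd (graph_of p) i) - ev (tl (graph_of p) i).
pose B i m := exists r : R, m = r *: w i.
have subB i : (i < n)%N -> submod (B i).
  move=> _; split=> [|_ _ [r ->] [r' ->]|r _ [r' ->]].
  - by exists 0; rewrite scale0r.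
  - by exists (r + r'); rewrite scalerDl.
  - by exists (r * r'); rewrite scalerA.
have : leval B p (ev 1%N - ev 0%N).
  by apply: potential_leval rp _ => i _; exists 1; rewrite scale1r.
move/(le_pq _ B subB)/leval_potential => [g [g0 g1 pg]].
have /fin_all_exists [a ga] (i : 'I_n) :
    exists r : R, g (hd (graph_of q) i) - g (tl (graph_of q) i) = r *: w i.
  by apply: pg; rewrite oq ltn_ord.
exists a; apply: solution_of_path_sums => [|| [//|e s] ms].
- exact: nv_graph_ge2.
- exact: graph_edges_within.
- have [tle hdl es] := maxdpath_shape rq oq ms.
  under eq_bigr => i _ do rewrite -ga.
  by rewrite sum_path_telescope // tle hdl g0 g1 subr0.
Qed.

Theorem lemma5p5 (R : pzRingType) (n : nat) (p q : lterm) :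
  one_balanced n p q ->
  ((forall (M : lmodType R) (B : nat -> M -> Prop),
      (forall i, (i < n)%N -> submod (B i)) ->
      forall x : M, leval B p x -> leval B q x)
   <-> has_solution n (graph_of p) (graph_of q) (1 : R)).
Proof.
move=> bal; split; first exact: solution_of_leval_le.
by case=> a; apply: leval_le_of_solution.
Qed.
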